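(* Let $\beta>0$. Then there is no $\lambda\in\mathbb{C}$ with $\operatorname{Re}\lambda>-1$ and $\lambda\notin\{0,1\}$ for which there exists $0\ne\phi\in C^\infty[-1,1]$ solving \[ \Big(\lambda^2+\lambda-\frac{2\lambda(1+\beta)}{1+\beta+y(1-\beta)}\Big)\phi+\Big(2\lambda y+2y-\frac{2(1+\beta)y}{1+\beta+y(1-\beta)}-\frac{2(1-\beta)}{1+\beta+y(1-\beta)}\Big)\phi'+(y^2-1)\phi''=0. \] As a result, $U_{1,\beta,\kappa}$ is mode-stable for all $\beta>0$, $\kappa\in\mathbb{R}$.
   Context: $U_{1,\beta,\kappa}(s,y)=s-\log\big((1+y)+\beta(1-y)\big)+\log(1+\beta)+\kappa$ is a generalized self-similar solution of $\partial_{tt}u-\partial_{xx}u=(\partial_tu)^2-(\partial_xu)^2$ in self-similar variables $s=-\ln(T-t)$, $y=\frac{x-x_0}{T-t}$. The eigenvalues of its linearised operator $\mathbf{L}^2_{1,\beta}$ are the $\lambda\in\mathbb{C}$ for which the displayed ODE has a nonzero $C^\infty[-1,1]$ solution; mode-stable means every such eigenvalue has negative real part or equals $0$ or $1$. *)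

From Stdlib Require Import Reals.
From Coquelicot Require Import Coquelicot.
Open Scope R_scope.

Definition denom (beta y : R) : R := 1 + beta + y * (1 - beta).

(* d is a tower of derivatives of phi : R -> C on the real line:
   d 0 = phi and d (n+1) is the derivative of d n everywhere.
   Hence phi is C^infinity, d 1 = phi', d 2 = phi''. *)
Definition derivative_tower (phi : R -> C) (d : nat -> R -> C) : Prop :=
  (forall x, d 0%nat x = phi x) /\
  (forall (n : nat) (x : R), is_derive (d n) x (d (S n) x)).

Definition eig_ode (beta : R) (lam : C) (phi phi' phi'' : R -> C) (y : R) : C :=
  ((lam * lam + lam
     - RtoC 2 * lam * RtoC (1 + beta) / RtoC (denom beta y)) * phi y
   + (RtoC 2 * lam * RtoC y + RtoC (2 * y)
      - RtoC (2 * (1 + beta) * y) / RtoC (denom beta y)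
      - RtoC (2 * (1 - beta)) / RtoC (denom beta y)) * phi' y
   + RtoC (y ^ 2 - 1) * phi'' y)%C.

(* lam is an eigenvalue of L^2_{1,beta}: the ODE has a nonzero solution in
   C^infinity[-1,1] (represented as the restriction to [-1,1] of a smooth
   function on R). *)
Definition is_eigenvalue (beta : R) (lam : C) : Prop :=
  exists (phi : R -> C) (d : nat -> R -> C),
    derivative_tower phi d /\
    (exists y, -1 <= y <= 1 /\ phi y <> 0%C) /\
    (forall y, -1 <= y <= 1 -> eig_ode beta lam phi (d 1%nat) (d 2%nat) y = 0%C).

(* Mode stability of U_{1,beta,kappa} (the linearised operator does not
   depend on kappa). *)
Definition mode_stable (beta : R) : Prop :=
  forall lam : C, is_eigenvalue beta lam ->
    Re lam < 0 \/ lam = 0%C \/ lam = 1%C.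

From Stdlib Require Import Reals Lra Classical.
From Coquelicot Require Import Coquelicot.
Open Scope R_scope.

(* With psi = D phi, where D = [denom beta], the eigenvalue equation reads
   (1 - y^2) psi'' - 2 lam y psi' - lam (lam - 1) psi = 0, which factors as
   (1 - y) w1 - lam w0 = 0 with w0 = (1 + y) psi' + (lam - 1) psi and
   w1 = w0'.  Differentiating gives (1 - y) w1' = (lam + 1) w1.  A solution
   of (b - y) g' = mu g with Re mu > 0 that is differentiable at the singular
   point b vanishes: g b = 0 and |g|^2 is nondecreasing up to b.  Hence
   w1 = 0 and w0 = 0; then w1' = (1 + y) psi''' + (lam + 1) psi'' = 0 gives
   psi'' = 0 by the same argument at y = -1, and back-substitution yields
   lam psi' = 0, (lam - 1) psi = 0, so phi = 0. *)

Lemma is_derive_ext_value {V : NormedModule R_AbsRing} (f g : R -> V) (x : R) (l l' : V) :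
  (forall t, f t = g t) -> l = l' -> is_derive f x l -> is_derive g x l'.
Proof. intros Hfg <-; apply is_derive_ext, Hfg. Qed.

(* The specialisation to [C] states the value equation at type [C], where [ring] applies. *)
Lemma is_derive_C_ext_value (f g : R -> C) (x : R) (l l' : C) :
  (forall t, f t = g t) -> l = l' -> is_derive f x l -> is_derive g x l'.
Proof. exact (is_derive_ext_value f g x l l'). Qed.

Lemma is_derive_C (f : R -> C) (x : R) (l : C) :
  is_derive f x l <->
  is_derive (fun t => Re (f t)) x (Re l) /\ is_derive (fun t => Im (f t)) x (Im l).
Proof.
  split.
  - intros Hf; split.
    + exact (filterdiff_comp' f fst x _ _ Hf (filterdiff_linear _ is_linear_fst)).
    + exact (filterdiff_comp' f snd x _ _ Hf (filterdiff_linear _ is_linear_snd)).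
  - intros [Hre Him].
    apply (is_derive_ext (fun t => (Re (f t), Im (f t)))).
    { intros t; destruct (f t); reflexivity. }
    destruct l as [l1 l2].
    apply (filterdiff_comp'_2 (fun t => Re (f t)) (fun t => Im (f t)) pair x _ _ pair Hre Him).
    apply (filterdiff_ext_lin _ (fun t => t)).
    + apply filterdiff_ext with (fun t => t); [intros [a b]; reflexivity | apply filterdiff_id].
    + intros [a b]; reflexivity.
Qed.

Lemma is_derive_RtoC (f : R -> R) (x l : R) :
  is_derive f x l -> is_derive (fun t => RtoC (f t)) x (RtoC l).
Proof.
  intros Hf; apply is_derive_C; split;
    [exact Hf | exact (is_derive_const (V := R_NormedModule) 0 x)].
Qed.

Lemma is_derive_Cplus (f g : R -> C) (x : R) (df dg : C) :
  is_derive f x df -> is_derive g x dg -> is_derive (fun t => f t + g t)%C x (df + dg)%C.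
Proof. exact (is_derive_plus f g x df dg). Qed.

Lemma is_derive_Cminus (f g : R -> C) (x : R) (df dg : C) :
  is_derive f x df -> is_derive g x dg -> is_derive (fun t => f t - g t)%C x (df - dg)%C.
Proof. exact (is_derive_minus f g x df dg). Qed.

Lemma is_derive_Cmult (f g : R -> C) (x : R) (df dg : C) :
  is_derive f x df -> is_derive g x dg ->
  is_derive (fun t => f t * g t)%C x (df * g x + f x * dg)%C.
Proof.
  rewrite !is_derive_C; intros [Hf1 Hf2] [Hg1 Hg2]; split.
  - refine (is_derive_ext_value _ _ x _ _ _ _
      (is_derive_minus _ _ x _ _ (Derive.is_derive_mult _ _ x _ _ Hf1 Hg1)
                                 (Derive.is_derive_mult _ _ x _ _ Hf2 Hg2)));
      [intros t|]; unfold minus, plus, opp; simpl; unfold Re, Im; ring.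
  - refine (is_derive_ext_value _ _ x _ _ _ _
      (is_derive_plus _ _ x _ _ (Derive.is_derive_mult _ _ x _ _ Hf1 Hg2)
                                (Derive.is_derive_mult _ _ x _ _ Hf2 Hg1)));
      [intros t|]; unfold plus; simpl; unfold Re, Im; ring.
Qed.

Lemma is_derive_Cscal (c : C) (f : R -> C) (x : R) (df : C) :
  is_derive f x df -> is_derive (fun t => c * f t)%C x (c * df)%C.
Proof.
  intros Hf.
  refine (is_derive_C_ext_value _ _ x _ _ _ _
    (is_derive_Cmult _ _ x _ _ (is_derive_const (K := R_AbsRing) c x) Hf));
    [reflexivity | change (zero : C) with (RtoC 0); ring].
Qed.

Lemma is_derive_affine_Cmult (a b : R) (f : R -> C) (x : R) (df : C) :
  is_derive f x df ->
  is_derive (fun t => RtoC (a + t * b) * f t)%C x (RtoC b * f x + RtoC (a + x * b) * df)%C.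
Proof.
  intros Hf; apply (is_derive_Cmult (fun t => RtoC (a + t * b)) f x _ _); [| exact Hf].
  apply is_derive_RtoC; auto_derive; [exact I | ring].
Qed.

Lemma Cmult_eq0_reg_l (a z : C) : a <> 0%C -> (a * z)%C = 0%C -> z = 0%C.
Proof.
  intros Ha Hz; replace z with (/ a * (a * z))%C by (field; exact Ha); rewrite Hz; ring.
Qed.

Lemma Ceq_of_sub_eq0 (a b : C) : (a - b)%C = 0%C -> a = b.
Proof. intros H; replace a with (b + (a - b))%C by ring; rewrite H; ring. Qed.

Lemma C_neq0_of_Re_pos (mu : C) : 0 < Re mu -> mu <> 0%C.
Proof. intros Hmu H; rewrite H in Hmu; simpl in Hmu; lra. Qed.

Lemma exists_near_point_in_interval (a b x delta : R) :
  a < b -> a <= x <= b -> 0 < delta ->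
  exists h, h <> 0 /\ Rabs h < delta /\ a <= x + h <= b.
Proof.
  intros Hab Hx Hdelta.
  destruct (Rlt_or_le x b) as [Hxb | Hxb].
  - exists (Rmin (delta / 2) (b - x)).
    pose proof (Rmin_l (delta / 2) (b - x)); pose proof (Rmin_r (delta / 2) (b - x)).
    assert (0 < Rmin (delta / 2) (b - x)) by (apply Rmin_glb_lt; lra).
    rewrite Rabs_pos_eq; lra.
  - exists (- Rmin (delta / 2) (b - a)).
    pose proof (Rmin_l (delta / 2) (b - a)); pose proof (Rmin_r (delta / 2) (b - a)).
    assert (0 < Rmin (delta / 2) (b - a)) by (apply Rmin_glb_lt; lra).
    rewrite Rabs_Ropp, Rabs_pos_eq; lra.
Qed.

Lemma is_derive_eq0_on_interval (f : R -> R) (a b x l : R) :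
  a < b -> a <= x <= b -> (forall y, a <= y <= b -> f y = 0) ->
  is_derive f x l -> l = 0.
Proof.
  intros Hab Hx Hf Hd; apply is_derive_Reals in Hd.
  destruct (Req_dec l 0) as [Hl | Hl]; [exact Hl | exfalso].
  destruct (Hd (Rabs l) (Rabs_pos_lt _ Hl)) as [delta Hdelta].
  destruct (exists_near_point_in_interval a b x delta Hab Hx (cond_pos delta))
    as [h [Hh0 [Hhd Hxh]]].
  specialize (Hdelta h Hh0 Hhd).
  rewrite (Hf _ Hxh), (Hf _ Hx) in Hdelta.
  replace ((0 - 0) / h - l) with (- l) in Hdelta by (field; exact Hh0).
  rewrite Rabs_Ropp in Hdelta; lra.
Qed.

Lemma is_derive_C_eq0_on_interval (f : R -> C) (a b x : R) (l : C) :
  a < b -> a <= x <= b -> (forall y, a <= y <= b -> f y = 0%C) ->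
  is_derive f x l -> l = 0%C.
Proof.
  intros Hab Hx Hf Hd; apply is_derive_C in Hd as [Hre Him].
  destruct l as [l1 l2]; unfold RtoC; f_equal.
  - apply (is_derive_eq0_on_interval (fun t => Re (f t)) a b x _ Hab Hx); [|exact Hre].
    intros y Hy; now rewrite (Hf y Hy).
  - apply (is_derive_eq0_on_interval (fun t => Im (f t)) a b x _ Hab Hx); [|exact Him].
    intros y Hy; now rewrite (Hf y Hy).
Qed.

Definition Cnorm2 (z : C) : R := Re z * Re z + Im z * Im z.

Lemma Cnorm2_le0 (z : C) : Cnorm2 z <= 0 -> z = 0%C.
Proof.
  unfold Cnorm2; intros Hz; destruct z as [u v]; simpl in Hz; unfold RtoC; f_equal; nra.
Qed.

Lemma is_derive_Cnorm2 (g : R -> C) (x : R) (dg : C) :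
  is_derive g x dg ->
  is_derive (fun t => Cnorm2 (g t)) x (2 * (Re (g x) * Re dg + Im (g x) * Im dg)).
Proof.
  intros Hg; apply is_derive_C in Hg as [Hre Him].
  refine (is_derive_ext_value _ _ x _ _ _ _
    (is_derive_plus _ _ x _ _ (Derive.is_derive_mult _ _ x _ _ Hre Hre)
                              (Derive.is_derive_mult _ _ x _ _ Him Him)));
    [reflexivity | unfold plus; simpl; ring].
Qed.

Lemma singular_ode_vanishes_right (g g' : R -> C) (mu : C) (a b : R) :
  0 < Re mu -> (forall y, is_derive g y (g' y)) ->
  (forall y, a <= y <= b -> (RtoC (b - y) * g' y)%C = (mu * g y)%C) ->
  forall y, a <= y <= b -> g y = 0%C.
Proof.
  intros Hmu Hg Hode y Hy.
  assert (Hgb : g b = 0%C).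
  { apply (Cmult_eq0_reg_l mu); [exact (C_neq0_of_Re_pos mu Hmu) |].
    rewrite <- (Hode b) by lra; rewrite Rminus_diag; ring. }
  set (h' t := 2 * (Re (g t) * Re (g' t) + Im (g t) * Im (g' t))).
  assert (Hh' : forall t, a <= t < b -> 0 <= h' t).
  { intros t Ht.
    assert (Hbt : (b - t) * h' t = 2 * Re mu * Cnorm2 (g t)).
    { pose proof (f_equal Re (Hode t ltac:(lra))) as Ere.
      pose proof (f_equal Im (Hode t ltac:(lra))) as Eim.
      simpl in Ere, Eim; unfold h', Cnorm2, Re, Im.
      transitivity (2 * (fst (g t) * ((b - t) * fst (g' t) - 0 * snd (g' t))
                         + snd (g t) * ((b - t) * snd (g' t) + 0 * fst (g' t)))); [ring |].
      rewrite Ere, Eim; ring. }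
    assert (0 <= Cnorm2 (g t)) by (unfold Cnorm2; nra).
    nra. }
  destruct (Req_dec y b) as [-> | Hyb]; [exact Hgb |].
  destruct (MVT_cor2 (fun t => Cnorm2 (g t)) h' y b) as [c [Hc Hcb]];
    [lra | intros c _; apply is_derive_Reals, is_derive_Cnorm2, Hg |].
  apply Cnorm2_le0.
  rewrite Hgb in Hc; unfold Cnorm2 at 1 in Hc; simpl in Hc.
  pose proof (Hh' c ltac:(lra)); nra.
Qed.

Lemma singular_ode_vanishes_left (g g' : R -> C) (mu : C) (a b : R) :
  0 < Re mu -> (forall y, is_derive g y (g' y)) ->
  (forall y, a <= y <= b -> (RtoC (y - a) * g' y + mu * g y)%C = 0%C) ->
  forall y, a <= y <= b -> g y = 0%C.
Proof.
  intros Hmu Hg Hode y Hy.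
  rewrite <- (Ropp_involutive y).
  apply (singular_ode_vanishes_right (fun t => g (- t)) (fun t => - g' (- t)%R)%C mu (- b) (- a));
    [exact Hmu | | | lra].
  - intros t.
    refine (is_derive_ext_value _ _ t _ _ _ _
      (is_derive_comp g (fun s => - s) t _ _ (Hg (- t)) (is_derive_opp _ t _ (is_derive_id t))));
      [reflexivity | exact (scal_opp_one (V := C_R_ModuleSpace) (g' (- t)))].
  - intros t Ht.
    symmetry; apply Ceq_of_sub_eq0; etransitivity; [| exact (Hode (- t) ltac:(lra))].
    rewrite !RtoC_minus, !RtoC_opp; ring.
Qed.

(* Leibniz's rule for the derivatives of (a + y b) phi. *)
Definition affine_mul_tower (a b : R) (d : nat -> R -> C) (n : nat) (y : R) : C :=
  (RtoC (INR n * b) * d (pred n) y + RtoC (a + y * b) * d n y)%C.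

Lemma derivative_tower_affine_mul (a b : R) (phi : R -> C) (d : nat -> R -> C) :
  derivative_tower phi d ->
  derivative_tower (fun y => RtoC (a + y * b) * phi y)%C (affine_mul_tower a b d).
Proof.
  intros [H0 HS]; split.
  - intros y; unfold affine_mul_tower; simpl; rewrite H0, Rmult_0_l; ring.
  - intros n y; unfold affine_mul_tower.
    refine (is_derive_C_ext_value _ _ y _ _ _ _
      (is_derive_Cplus _ _ y _ _ (is_derive_Cscal _ _ y _ (HS (pred n) y))
                                 (is_derive_affine_Cmult a b _ y _ (HS n y))));
      [reflexivity |].
    destruct n as [|n]; simpl pred; rewrite ?S_INR; simpl INR;
      repeat rewrite ?RtoC_plus, ?RtoC_mult; ring.
Qed.

Definition euler_op (e : nat -> R -> C) (mu : C) (k : nat) (y : R) : C :=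
  (RtoC (1 + y) * e (S k) y + mu * e k y)%C.

Lemma is_derive_euler_op (e : nat -> R -> C) (mu : C) (k : nat) (y : R) :
  (forall n t, is_derive (e n) t (e (S n) t)) ->
  is_derive (euler_op e mu k) y (euler_op e (mu + 1) (S k) y).
Proof.
  intros He; unfold euler_op.
  refine (is_derive_C_ext_value _ _ y _ _ _ _
    (is_derive_Cplus _ _ y _ _ (is_derive_affine_Cmult 1 1 _ y _ (He (S k) y))
                               (is_derive_Cscal mu _ y _ (He k y))));
    [intros t; now rewrite Rmult_1_r | rewrite Rmult_1_r; ring].
Qed.

Lemma denom_pos (beta y : R) : 0 < beta -> -1 <= y <= 1 -> 0 < denom beta y.
Proof. intros Hbeta Hy; unfold denom; nra. Qed.

Lemma eig_ode_factorization (beta : R) (lam : C) (phi : R -> C) (d : nat -> R -> C) (y : R) :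
  denom beta y <> 0 -> d 0%nat y = phi y ->
  (RtoC (1 - y) * euler_op (affine_mul_tower (1 + beta) (1 - beta) d) lam 1 y
   - lam * euler_op (affine_mul_tower (1 + beta) (1 - beta) d) (lam - 1) 0 y)%C
  = (- RtoC (denom beta y) * eig_ode beta lam phi (d 1%nat) (d 2%nat) y)%C.
Proof.
  intros HD Hd0.
  assert (HDC : RtoC (denom beta y) <> 0%C) by (intros H; apply HD; now injection H).
  unfold eig_ode, euler_op, affine_mul_tower, denom in *; simpl pred; simpl INR; rewrite Hd0.
  repeat rewrite ?RtoC_plus, ?RtoC_mult, ?RtoC_minus, ?RtoC_pow in *.
  field; exact HDC.
Qed.

Section Eigenfunction.

Variables (beta : R) (lam : C) (phi : R -> C) (d : nat -> R -> C).
Hypotheses (hbeta : 0 < beta) (hlam : -1 < Re lam) (hlam0 : lam <> 0%C) (hlam1 : lam <> 1%C).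
Hypothesis hd : derivative_tower phi d.
Hypothesis hode : forall y, -1 <= y <= 1 -> eig_ode beta lam phi (d 1%nat) (d 2%nat) y = 0%C.

Let psi := affine_mul_tower (1 + beta) (1 - beta) d.
Let w0 := euler_op psi (lam - 1) 0.
Let w1 := euler_op psi lam 1.
Let w2 := euler_op psi (lam + 1) 2.

Let hpsi : derivative_tower (fun y => RtoC (denom beta y) * phi y)%C psi :=
  derivative_tower_affine_mul (1 + beta) (1 - beta) phi d hd.

Lemma is_derive_w0 (y : R) : is_derive w0 y (w1 y).
Proof.
  pose proof (is_derive_euler_op psi (lam - 1) 0 y (proj2 hpsi)) as Hw0.
  replace (lam - 1 + 1)%C with lam in Hw0 by ring; exact Hw0.
Qed.

Lemma is_derive_w1 (y : R) : is_derive w1 y (w2 y).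
Proof. exact (is_derive_euler_op psi lam 1 y (proj2 hpsi)). Qed.

Lemma factorization_eq0 (y : R) : -1 <= y <= 1 -> (RtoC (1 - y) * w1 y - lam * w0 y)%C = 0%C.
Proof.
  intros Hy; unfold w0, w1, psi.
  rewrite (eig_ode_factorization beta lam phi d y), (hode y Hy); [ring | |].
  - exact (Rgt_not_eq _ _ (denom_pos beta y hbeta Hy)).
  - exact (proj1 hd y).
Qed.

Lemma w1_ode (y : R) : -1 <= y <= 1 -> (RtoC (1 - y) * w2 y)%C = ((lam + 1) * w1 y)%C.
Proof.
  intros Hy.
  assert (HE : is_derive (fun t => RtoC (1 + t * -1) * w1 t - lam * w0 t)%C y
                 (RtoC (-1) * w1 y + RtoC (1 + y * -1) * w2 y - lam * w1 y)%C).
  { apply is_derive_Cminus; [apply is_derive_affine_Cmult, is_derive_w1 |].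
    apply is_derive_Cscal, is_derive_w0. }
  apply Ceq_of_sub_eq0; etransitivity;
    [| refine (is_derive_C_eq0_on_interval _ (-1) 1 y _ _ Hy _ HE)].
  - replace (1 + y * -1) with (1 - y) by ring; ring.
  - lra.
  - intros t Ht; replace (1 + t * -1) with (1 - t) by ring; exact (factorization_eq0 t Ht).
Qed.

Lemma w1_eq0 (y : R) : -1 <= y <= 1 -> w1 y = 0%C.
Proof.
  apply (singular_ode_vanishes_right w1 w2 (lam + 1) (-1) 1);
    [change (0 < Re lam + 1); lra | exact is_derive_w1 | exact w1_ode].
Qed.

Lemma w0_eq0 (y : R) : -1 <= y <= 1 -> w0 y = 0%C.
Proof.
  intros Hy; apply (Cmult_eq0_reg_l lam _ hlam0).
  transitivity (RtoC (1 - y) * w1 y - (RtoC (1 - y) * w1 y - lam * w0 y))%C; [ring |].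
  rewrite (factorization_eq0 y Hy), (w1_eq0 y Hy); ring.
Qed.

Lemma w2_eq0 (y : R) : -1 <= y <= 1 -> w2 y = 0%C.
Proof.
  intros Hy.
  exact (is_derive_C_eq0_on_interval w1 (-1) 1 y _ ltac:(lra) Hy w1_eq0 (is_derive_w1 y)).
Qed.

Lemma psi2_eq0 (y : R) : -1 <= y <= 1 -> psi 2%nat y = 0%C.
Proof.
  apply (singular_ode_vanishes_left (psi 2%nat) (psi 3%nat) (lam + 1) (-1) 1);
    [change (0 < Re lam + 1); lra | exact (proj2 hpsi 2%nat) |].
  intros t Ht; replace (t - -1) with (1 + t) by ring; exact (w2_eq0 t Ht).
Qed.

Lemma eigenfunction_eq0 (y : R) : -1 <= y <= 1 -> phi y = 0%C.
Proof.
  intros Hy.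
  assert (Hpsi1 : psi 1%nat y = 0%C).
  { apply (Cmult_eq0_reg_l lam _ hlam0).
    rewrite <- (w1_eq0 y Hy); unfold w1, euler_op; rewrite (psi2_eq0 y Hy); ring. }
  assert (Hpsi0 : psi 0%nat y = 0%C).
  { apply (Cmult_eq0_reg_l (lam - 1)); [intros H; apply hlam1, Ceq_of_sub_eq0, H |].
    rewrite <- (w0_eq0 y Hy); unfold w0, euler_op; rewrite Hpsi1; ring. }
  apply (Cmult_eq0_reg_l (RtoC (denom beta y))).
  - intros H; injection H; pose proof (denom_pos beta y hbeta Hy); lra.
  - rewrite <- Hpsi0; symmetry; exact (proj1 hpsi y).
Qed.

End Eigenfunction.

Lemma no_eigenvalue_right_of_minus_one (beta : R) (lam : C) :
  0 < beta -> -1 < Re lam -> lam <> 0%C -> lam <> 1%C -> ~ is_eigenvalue beta lam.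
Proof.
  intros hbeta hlam hlam0 hlam1 [phi [d [hd [[y [Hy Hnz]] hode]]]].
  exact (Hnz (eigenfunction_eq0 beta lam phi d hbeta hlam hlam0 hlam1 hd hode y Hy)).
Qed.

Theorem proposition4p2 (beta : R) (hbeta : 0 < beta) :
  (forall lam : C, -1 < Re lam -> lam <> 0%C -> lam <> 1%C ->
     ~ is_eigenvalue beta lam) /\
  (forall kappa : R, mode_stable beta).
Proof.
  split.
  - intros lam; exact (no_eigenvalue_right_of_minus_one beta lam hbeta).
  - intros _ lam Hlam.
    destruct (Rlt_or_le (Re lam) 0) as [Hneg | Hnonneg]; [now left | right].
    destruct (classic (lam = 0%C)) as [H0 | H0]; [now left |].
    destruct (classic (lam = 1%C)) as [H1 | H1]; [now right |].
    exfalso; exact (no_eigenvalue_right_of_minus_one beta lam hbeta ltac:(lra) H0 H1 Hlam).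
Qed.
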